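(* Let $X$ be a scalar random variable with distribution $\pi$ and upper bound $\ell\in\mathbb{R}$ such that $\mathbb{P}_\pi[X\le\ell]=1$. Let $\alpha\in(0,1]$, $\epsilon\in[0,1]$, and define \[ L(x,\mu,t)=t\left(\mu+e^{\frac{x}{t}-\mu-\ln(\alpha)-1}\right),\qquad u_b(\mu,t)=L(\ell,\mu,t). \] For $N$ independent samples $x_1,\dots,x_N$ of $X$, let $\zeta^*_N(\mu,t)=\max_{1\le k\le N}L(x_k,\mu,t)$. Then \[ \mathbb{P}^N_{\pi}\left[\mathrm{EVaR}_\alpha(X)\le \inf_{\mu\in\mathbb{R},\ t>0}\zeta^*_N(\mu,t)(1-\epsilon)+u_b(\mu,t)\epsilon\right]\ge 1-(1-\epsilon)^N. \]
   Context: The Entropic-Value-at-Risk at level $\alpha\in(0,1]$ is $\mathrm{EVaR}_\alpha(X)=\inf_{z>0}\frac{1}{z}\ln\left(\frac{\mathbb{E}_\pi[e^{zX}]}{\alpha}\right)$. $\zeta^*_N(\mu,t)$ is the solution of $\min_\zeta\zeta$ subject to $\zeta\ge L(x_i,\mu,t)$ for all $i$. $\mathbb{P}^N_\pi$ is the $N$-fold product measure governing the i.i.d. sample. *)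

From HB Require Import structures.
From mathcomp Require Import all_boot all_order all_algebra.
From mathcomp Require Import all_classical all_reals all_analysis.
Set Implicit Arguments. Unset Strict Implicit. Unset Printing Implicit Defensive.
Import Order.TTheory GRing.Theory Num.Theory.
Import numFieldNormedType.Exports.
Local Open Scope classical_set_scope.
Local Open Scope ring_scope.

(* E_pi[e^{zX}] as a real number (finite whenever X is a.s. bounded above). *)
Definition mgf (R : realType) (pi : probability R R) (z : R) : R :=
  fine (\int[pi]_x (expR (z * x))%:E)%E.

Definition EVaR (R : realType) (pi : probability R R) (alpha : R) : \bar R :=
  ereal_inf [set ((z^-1 * ln (mgf pi z / alpha))%:E) | z in [set z : R | 0 < z]].

Definition evar_L (R : realType) (alpha x mu t : R) : R :=
  t * (mu + expR (x / t - mu - ln alpha - 1)).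

(* zeta*_N(mu,t) = max_k L(x_k,mu,t) (as an extended real; finite when N >= 1) *)
Definition zetaN (R : realType) (N : nat) (alpha : R) (xs : 'I_N -> R) (mu t : R)
  : \bar R :=
  (\big[maxe/-oo]_(k < N) (evar_L alpha (xs k) mu t)%:E)%E.

From HB Require Import structures.
From mathcomp Require Import all_boot all_order all_algebra.
From mathcomp Require Import all_classical all_reals all_analysis.
From mathcomp Require Import ring lra measurable_realfun.
Import Order.TTheory GRing.Theory Num.Theory.
Import numFieldNormedType.Exports.
Local Open Scope classical_set_scope.
Local Open Scope ring_scope.

(* Let c be the upper eps-quantile of pi, so that P[X > c] <= eps and, for eps < 1,
   P[X < c] <= 1 - eps.  By independence, all N samples fall below c with probability
   at most (1 - eps)^N; otherwise some sample x_k >= c satisfies P[X > x_k] <= eps.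
   For a = min x_k ell the almost sure bound
     e^(X/t) <= e^(a/t) + (e^(ell/t) - e^(a/t)) 1_{X > a}
   gives E[e^(X/t)] <= (1 - eps) e^(a/t) + eps e^(ell/t), and the variational
   inequality ln y <= mu + y e^(-mu-1), used at z = 1/t in the definition of EVaR, turns
   this into EVaR <= (1 - eps) L(a,mu,t) + eps L(ell,mu,t), which is at most
   (1 - eps) zeta*_N(mu,t) + eps u_b(mu,t) because L is nondecreasing in x. *)

Lemma nondecreasing_bigcup_measure_le d (T : measurableType d) (R : realType)
    (mu : {measure set T -> \bar R}) (F : (set T)^nat) (b : \bar R) :
  (forall n, measurable (F n)) -> nondecreasing_seq F ->
  (forall n, mu (F n) <= b)%E -> (mu (\bigcup_n F n) <= b)%E.
Proof.
move=> mF ndF Fb.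
have := @nondecreasing_cvg_mu _ _ _ mu F mF (bigcupT_measurable F mF) ndF.
by move/cvge_to_le; apply; exact: nearW.
Qed.

Lemma measurable_EFin_indic (R : realType) {d} {T : measurableType d} {A : set T} :
  measurable A -> measurable_fun setT (fun x => (\1_A x : R)%:E).
Proof. by move=> mA; exact/measurable_EFinP/measurable_indic. Qed.

Section measure_of_rays.
Context {R : realType} (mu : {measure set R -> \bar R}).

Lemma le_measure_itvoy (r s : R) : r <= s ->
  (mu `]s, +oo[%classic <= mu `]r, +oo[%classic)%E.
Proof.
move=> rs; apply: le_measure; rewrite ?inE //.
by move=> x /=; rewrite !in_itv /= !andbT; exact: le_lt_trans.
Qed.

Lemma measure_itvoy_le (c : R) (b : \bar R) :
  (forall r, c < r -> (mu `]r, +oo[%classic <= b)%E) -> (mu `]c, +oo[%classic <= b)%E.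
Proof.
move=> rb; rewrite (_ : `]c, +oo[%classic = \bigcup_k `](c + k.+1%:R^-1), +oo[%classic).
  apply: nondecreasing_bigcup_measure_le => // [k m km|k].
    apply/subsetPset => x /=; rewrite !in_itv /= !andbT; apply: le_lt_trans.
    by rewrite lerD2l lef_pV2 ?posrE // ler_nat.
  by apply: rb; rewrite ltrDl invr_gt0.
apply/seteqP; split => x /=; rewrite in_itv /= andbT.
  by move/ltr_add_invr => [k ck]; exists k => //=; rewrite in_itv /= andbT.
by move=> [k _] /=; rewrite in_itv /= andbT; apply: lt_trans; rewrite ltrDl invr_gt0.
Qed.

Lemma measure_itvNyo_le (c : R) (b : \bar R) :
  (forall r, r < c -> (mu `]-oo, r]%classic <= b)%E) -> (mu `]-oo, c[%classic <= b)%E.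
Proof.
move=> rb; rewrite (_ : `]-oo, c[%classic = \bigcup_k `]-oo, (c - k.+1%:R^-1)]%classic).
  apply: nondecreasing_bigcup_measure_le => // [k m km|k].
    apply/subsetPset => x /=; rewrite !in_itv /=; move/le_trans; apply.
    by rewrite lerD2l lerN2 lef_pV2 ?posrE // ler_nat.
  by apply: rb; rewrite ltrBlDr ltrDl invr_gt0.
apply/seteqP; split => x /=; rewrite in_itv /=.
  by move/ltr_add_invr => [k xk]; exists k => //=; rewrite in_itv /= lerBrDr ltW.
move=> [k _] /=; rewrite in_itv /= => /le_lt_trans; apply.
by rewrite ltrBlDr ltrDl invr_gt0.
Qed.

End measure_of_rays.

Section probability_on_the_line.
Context {R : realType} (pi : probability R R).

Lemma probability_itvNyc (a : R) : pi `]-oo, a]%classic = (1 - pi `]a, +oo[%classic)%E.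
Proof.
rewrite -(probability_setC pi (measurable_itv `]a, +oo[)).
by congr (pi _); rewrite setCitvr.
Qed.

Lemma probability_itvoy_eq0 (ell : R) :
  pi [set x | x <= ell] = 1%E -> pi `]ell, +oo[%classic = 0%E.
Proof.
rewrite (_ : [set x | x <= ell] = `]-oo, ell]%classic); last first.
  by apply/seteqP; split => x /=; rewrite in_itv.
rewrite probability_itvNyc -(fineK (fin_num_measure pi _ (measurable_itv `]ell, +oo[))).
by rewrite -EFinB => -[tail_ell]; congr EFin; lra.
Qed.

Lemma probability_itvoy_gt {eps : R} : eps < 1 ->
  exists n : nat, (eps%:E < pi `](- n%:R)%R, +oo[%classic)%E.
Proof.
move=> eps_lt1; apply/not_existsP => small.
have : (pi (\bigcup_n `](- n%:R)%R, +oo[%classic) <= eps%:E)%E.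
  apply: nondecreasing_bigcup_measure_le => // [n m nm|n].
    apply/subsetPset => x /=; rewrite !in_itv /= !andbT; apply: le_lt_trans.
    by rewrite lerN2 ler_nat.
  by rewrite leNgt; apply/negP; exact: small.
rewrite (_ : \bigcup_n _ = setT) ?probability_setT ?lee_fin; first by lra.
apply/seteqP; split => // x _; exists (Num.truncn (- x)).+1 => //=.
by rewrite in_itv /= andbT ltrNl truncnS_gt.
Qed.

Lemma probability_quantile {eps ell : R} : eps < 1 ->
  (pi `]ell, +oo[%classic <= eps%:E)%E ->
  exists c, (pi `]c, +oo[%classic <= eps%:E)%E /\
            (pi `]-oo, c[%classic <= (1 - eps)%:E)%E.
Proof.
move=> eps_lt1 tail_ell.
pose S := [set c : R | (pi `]c, +oo[%classic <= eps%:E)%E].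
have [n tail_n] := probability_itvoy_gt eps_lt1.
have S_lb : lbound S (- n%:R).
  move=> s Ss; rewrite leNgt; apply/negP => /ltW /(le_measure_itvoy pi).
  by move=> /le_trans /(_ Ss); rewrite leNgt tail_n.
have S_inf : has_inf S by split; [exists ell | exists (- n%:R)].
exists (inf S); split.
  apply: measure_itvoy_le => r /(inf_lt (proj1 S_inf)) [s Ss sr].
  by apply: le_trans Ss; exact: le_measure_itvoy (ltW sr).
have below_inf r : r < inf S -> (pi `]-oo, r]%classic <= (1 - eps)%:E)%E.
  move=> r_lt_inf; have : ~ S r.
    by move=> /(ge_inf (proj2 S_inf)); rewrite leNgt r_lt_inf.
  move=> /negP; rewrite -ltNge probability_itvNyc.
  rewrite -(fineK (fin_num_measure pi _ (measurable_itv `]r, +oo[))).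
  by rewrite -EFinB !lte_fin lee_fin; lra.
exact: measure_itvNyo_le.
Qed.

Lemma integral_cst_add_indic (A : set R) (c k : R) :
  measurable A -> 0 <= c -> 0 <= k ->
  (\int[pi]_x (c%:E + k%:E * (\1_A x)%:E) = c%:E + k%:E * pi A)%E.
Proof.
move=> mA c_ge0 k_ge0.
have mA1 := measurable_EFin_indic R mA.
rewrite ge0_integralD //; last 2 first.
- by move=> x _; rewrite mule_ge0 ?lee_fin.
- by apply: emeasurable_funM => //; exact: measurable_cst.
rewrite ge0_integralZl_EFin // ?integral_indic // ?setIT.
rewrite integral_cst //; congr (_ + _)%E.
by rewrite -[RHS]mule1; congr (_ * _)%E; exact: probability_setT.
Qed.

Lemma integral_expR_gt0 {z : R} : 0 <= z -> (0 < \int[pi]_x (expR (z * x))%:E)%E.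
Proof.
move=> z_ge0; have [n tail_n] := probability_itvoy_gt (@ltr01 R).
pose b : R := - n%:R.
have mA1 := measurable_EFin_indic R (measurable_itv `]b, +oo[).
apply: (@lt_le_trans _ _ (\int[pi]_x ((expR (z * b))%:E * (\1_(`]b, +oo[%classic) x)%:E))%E).
  rewrite ge0_integralZl_EFin ?integral_indic ?setIT ?expR_ge0 //.
  by rewrite mule_gt0 // lte_fin expR_gt0.
apply: ge0_le_integral => //.
- by apply: emeasurable_funM => //; exact: measurable_cst.
- by apply/measurable_EFinP; apply: measurableT_comp => //; exact: measurable_funM.
move=> x _; rewrite indicE; case: (boolP (x \in _)) => [|_].
  rewrite inE /= in_itv /= andbT -EFinM mulr1 lee_fin ler_expR => /ltW; exact: ler_wpM2l.
by rewrite -EFinM mulr0 lee_fin expR_ge0.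
Qed.

Lemma integral_expR_le {ell a eps z : R} : 0 <= z -> 0 <= eps ->
  pi `]ell, +oo[%classic = 0%E -> a <= ell -> (pi `]a, +oo[%classic <= eps%:E)%E ->
  (\int[pi]_x (expR (z * x))%:E <= ((1 - eps) * expR (z * a) + eps * expR (z * ell))%:E)%E.
Proof.
move=> z_ge0 eps_ge0 tail_ell a_le_ell tail_a.
pose k := expR (z * ell) - expR (z * a).
have k_ge0 : 0 <= k by rewrite subr_ge0 ler_expR ler_wpM2l.
have mA1 := measurable_EFin_indic R (measurable_itv `]a, +oo[).
apply: (@le_trans _ _ (\int[pi]_x ((expR (z * a))%:E + k%:E * (\1_(`]a, +oo[%classic) x)%:E))%E).
  apply: ae_ge0_le_integral => //.
  - by apply/measurable_EFinP; apply: measurableT_comp => //; exact: measurable_funM.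
  - by move=> x _; rewrite adde_ge0 ?mule_ge0 ?lee_fin ?expR_ge0.
  - apply: emeasurable_funD; first exact: measurable_cst.
    by apply: emeasurable_funM => //; exact: measurable_cst.
  exists `]ell, +oo[%classic; split => // x /= below_ell.
  rewrite in_itv /= andbT ltNge; apply/negP => x_le_ell; apply: below_ell => _.
  rewrite indicE /k -EFinM -EFinD lee_fin; case: (boolP (x \in _)) => [_|].
    by rewrite mulr1 subrKC ler_expR; exact: ler_wpM2l.
  rewrite mulr0 addr0 mem_setE in_itv /= andbT -leNgt => x_le_a.
  by rewrite ler_expR; exact: ler_wpM2l.
rewrite integral_cst_add_indic ?expR_ge0 //.
rewrite -(fineK (fin_num_measure pi _ (measurable_itv `]a, +oo[))) in tail_a *.
rewrite -EFinM -EFinD lee_fin.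
have : k * fine (pi `]a, +oo[%classic) <= k * eps by rewrite ler_wpM2l.
by rewrite /k; lra.
Qed.

End probability_on_the_line.

Lemma mgf_tail_bound {R : realType} (pi : probability R R) {ell a eps z : R} :
  0 <= z -> 0 <= eps ->
  pi `]ell, +oo[%classic = 0%E -> a <= ell -> (pi `]a, +oo[%classic <= eps%:E)%E ->
  0 < mgf pi z <= (1 - eps) * expR (z * a) + eps * expR (z * ell).
Proof.
move=> z_ge0 eps_ge0 tail_ell a_le_ell tail_a.
have mgf_gt0 := integral_expR_gt0 pi z_ge0.
have mgf_le := integral_expR_le pi z_ge0 eps_ge0 tail_ell a_le_ell tail_a.
rewrite /mgf -lte_fin -lee_fin fineK ?mgf_gt0 ?mgf_le //.
by rewrite ge0_fin_numE ?ltW //; apply: le_lt_trans mgf_le _; exact: ltry.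
Qed.

Lemma ln_le_affine {R : realType} (y mu : R) : 0 < y -> ln y <= mu + y * expR (- mu - 1).
Proof.
move=> y_gt0; have := expR_ge1Dx (ln y - mu - 1).
by rewrite -addrA expRD lnK ?posrE //; lra.
Qed.

Lemma le_evar_L {R : realType} (alpha mu t : R) : 0 < t ->
  {homo (fun x => evar_L alpha x mu t) : x y / x <= y}.
Proof.
move=> t_gt0 x y xy; rewrite /evar_L ler_pM2l // lerD2l ler_expR !lerD2r.
by rewrite ler_pM2r // invr_gt0.
Qed.

Lemma evar_L_expR {R : realType} (alpha x mu t : R) : 0 < alpha ->
  evar_L alpha x mu t = t * mu + t * (expR (- mu - 1) / alpha) * expR (t^-1 * x).
Proof.
move=> alpha_gt0; rewrite /evar_L.
rewrite (_ : x / t - mu - ln alpha - 1 = t^-1 * x + (- mu - 1) + - ln alpha); last by ring.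
by rewrite expRD (expRD (t^-1 * x)) (expRN (ln alpha)) lnK ?posrE //; ring.
Qed.

Lemma EVaR_le_ln_mgf {R : realType} (pi : probability R R) (alpha : R) {t : R} : 0 < t ->
  (EVaR pi alpha <= (t * ln (mgf pi t^-1 / alpha))%:E)%E.
Proof.
by move=> t_gt0; apply: ereal_inf_lbound; exists t^-1; rewrite /= ?invr_gt0 ?invrK.
Qed.

Lemma EVaR_le_evar_L_mix {R : realType} (pi : probability R R) {alpha ell a : R} (mu : R)
    {t eps : R} :
  0 < alpha -> 0 < t -> 0 <= eps ->
  pi `]ell, +oo[%classic = 0%E -> a <= ell -> (pi `]a, +oo[%classic <= eps%:E)%E ->
  (EVaR pi alpha <= ((1 - eps) * evar_L alpha a mu t + eps * evar_L alpha ell mu t)%:E)%E.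
Proof.
move=> alpha_gt0 t_gt0 eps_ge0 tail_ell a_le_ell tail_a.
have z_ge0 : 0 <= t^-1 by rewrite invr_ge0 ltW.
have /andP[mgf_gt0 mgf_le] := mgf_tail_bound pi z_ge0 eps_ge0 tail_ell a_le_ell tail_a.
apply: le_trans (EVaR_le_ln_mgf pi alpha t_gt0) _.
rewrite lee_fin !evar_L_expR //.
set Y := mgf pi t^-1 in mgf_gt0 mgf_le *; set K := expR (- mu - 1) / alpha.
have tK_ge0 : 0 <= t * K by rewrite mulr_ge0 ?divr_ge0 ?expR_ge0 ?ltW.
have ln_le : ln (Y / alpha) <= mu + K * Y.
  have -> : K * Y = Y / alpha * expR (- mu - 1) by rewrite /K; ring.
  exact/ln_le_affine/divr_gt0.
have := ler_wpM2l tK_ge0 mgf_le; have := ler_wpM2l (ltW t_gt0) ln_le.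
by lra.
Qed.

Lemma EVaR_le_inf_zetaN {R : realType} (pi : probability R R) {alpha ell eps : R}
    {N : nat} (xs : 'I_N -> R) (k : 'I_N) :
  0 < alpha -> 0 <= eps <= 1 -> pi `]ell, +oo[%classic = 0%E ->
  (pi `](xs k), +oo[%classic <= eps%:E)%E ->
  (EVaR pi alpha <=
     ereal_inf [set (zetaN alpha xs mu t * (1 - eps)%:E + (evar_L alpha ell mu t * eps)%:E)%E
               | mu in [set: R] & t in [set t : R | (0 < t)%R]])%E.
Proof.
move=> alpha_gt0 /andP[eps_ge0 eps_le1] tail_ell tail_k.
apply: le_ereal_inf_tmp => _ [mu _ [t t_gt0 <-]].
pose a := Num.min (xs k) ell.
have tail_a : (pi `]a, +oo[%classic <= eps%:E)%E.
  by rewrite /a minEle; case: ifP => // _; rewrite tail_ell lee_fin.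
have a_le_ell : a <= ell by rewrite ge_min lexx orbT.
apply: le_trans (EVaR_le_evar_L_mix pi mu alpha_gt0 t_gt0 eps_ge0 tail_ell a_le_ell tail_a) _.
rewrite EFinD [eps * _]mulrC leeD2r // mulrC EFinM lee_wpmul2r ?lee_fin ?subr_ge0 //.
apply: le_trans (le_bigmax _ (fun i => (evar_L alpha (xs i) mu t)%:E) k).
by rewrite lee_fin le_evar_L // ge_min lexx.
Qed.

Theorem corollary4 (R : realType) (d : measure_display) (Omega : measurableType d)
  (P : probability Omega R) (pi : probability R R) (ell alpha eps : R) (N : nat)
  (Xs : 'I_N -> Omega -> R) :
  pi [set x : R | x <= ell] = 1%E ->
  0 < alpha <= 1 ->
  0 <= eps <= 1 ->
  (0 < N)%N ->
  (forall k, measurable_fun setT (Xs k)) ->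
  (* x_1, ..., x_N are i.i.d. with distribution pi: their joint law is pi^N *)
  (forall B : 'I_N -> set R, (forall k, measurable (B k)) ->
     P (\bigcap_(k in [set: 'I_N]) (Xs k @^-1` B k)) = (\prod_(k < N) pi (B k))%E) ->
  exists A : set Omega, [/\ measurable A,
    A `<=` [set w | (EVaR pi alpha <=
      ereal_inf [set (zetaN alpha (fun k => Xs k w) mu t * (1 - eps)%:E
                       + (evar_L alpha ell mu t * eps)%:E)%E
                | mu in [set: R] & t in [set t : R | (0 < t)%R]])%E] &
    ((1 - (1 - eps) ^+ N)%:E <= P A)%E].
Proof.
move=> /probability_itvoy_eq0 tail_ell /andP[alpha_gt0 _] eps01 N_gt0 mX iid.
have /andP[eps_ge0 eps_le1] := eps01.
have [eps_lt1|eps_ge1] := ltP eps 1; last first.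
  (* the quantile c may not exist for eps = 1, but then the bound is trivial *)
  have eps1 : eps = 1 by apply/le_anti; rewrite eps_le1 eps_ge1.
  exists setT; split => // [w _|]; last first.
    by rewrite eps1 subrr expr0n gtn_eqF // subr0 probability_setT.
  apply: (EVaR_le_inf_zetaN pi _ (Ordinal N_gt0)) => //.
  by rewrite eps1 probability_le1.
have tail_ell_le : (pi `]ell, +oo[%classic <= eps%:E)%E by rewrite tail_ell lee_fin.
have [c [tail_c below_c]] := probability_quantile pi eps_lt1 tail_ell_le.
pose B := \bigcap_(k in [set: 'I_N]) (Xs k @^-1` `]-oo, c[%classic).
have mB : measurable B.
  apply: fin_bigcap_measurable => // k _; rewrite -[X in measurable X]setTI.
  exact: mX.
exists (~` B); split; first exact: measurableC.
  move=> w /= notB; have [k c_le_k] : exists k, c <= Xs k w.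
    apply/not_existsP => below; apply: notB => k _ /=.
    by rewrite in_itv /= ltNge; apply/negP; exact: below.
  apply: (EVaR_le_inf_zetaN pi _ k) => //.
  by apply: le_trans tail_c; exact: le_measure_itvoy.
rewrite probability_setC // (iid (fun=> `]-oo, c[%classic)) //.
rewrite -(fineK (fin_num_measure pi _ (measurable_itv `]-oo, c[))) in below_c *.
rewrite prodEFin prodr_const card_ord -EFinB lee_fin lerB // lerXn2r ?nnegrE ?subr_ge0 //.
exact/fine_ge0/measure_ge0.
Qed.
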